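(* Let $A$ be a deterministic KAT automaton over $(\Sigma_0,T_0)$, let $\mathfrak{s}$ assign to each $p\in\Sigma_0$ a deterministic KAT automaton $\mathfrak{s}(p)$ over $(\Sigma_1,T_1)$, and let $\mathfrak{t}:T_0\to\mathsf{BA}(T_1)$. Then $L(\mathsf{compose}^{\mathfrak{s}}_{\mathfrak{t}}(A))=\mathrm{apply}^{\mathfrak{s}'}_{\mathfrak{t}}(L(A))$, where $\mathfrak{s}'(p)=L(\mathfrak{s}(p))$.
   Context: Atoms $\mathsf{At}_T=2^T$; $\mathsf{BA}(T)$ Boolean expressions over $T$; $\alpha\le b$ means $b$ holds under the assignment making exactly the tests in $\alpha$ true. Guarded strings: words in $\mathsf{At}_T(\Sigma\mathsf{At}_T)^*$; $w'\alpha\diamond\alpha x'=w'\alpha x'$. Deterministic KAT automaton over $(\Sigma,T)$: $A=(Q,\delta,\iota)$, $Q$ finite, $\delta:Q\times\mathsf{At}_T\to\{\mathsf{accept},\mathsf{reject}\}+\Sigma\times Q$, $\iota:\mathsf{At}_T\to\{\mathsf{accept},\mathsf{reject}\}+\Sigma\times Q$. $L_A(\gamma)$ is the smallest set with $\gamma(\alpha)=\mathsf{accept}\Rightarrow\alpha\in L_A(\gamma)$ and $\gamma(\alpha)=(p,q)$, $w\in L_A(\delta(q,-))\Rightarrow\alpha pw\in L_A(\gamma)$; $L(A)=L_A(\iota)$. Language substitution: $\beta\in\mathsf{At}_{T_1}$ is $\mathfrak{t}$-consistent with $\alpha\in\mathsf{At}_{T_0}$ if $\alpha\le t\iff\beta\le\mathfrak{t}(t)$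 for all $t\in T_0$; $\mathrm{apply}_{\mathfrak{t}}(L)=\{\beta_0p_0\cdots p_{n-1}\beta_n:\exists\alpha_0p_0\cdots p_{n-1}\alpha_n\in L$ with each $\beta_i$ $\mathfrak{t}$-consistent with $\alpha_i\}$; for $L$ over $(\Sigma_0,T_1)$ and $\mathfrak{s}'$ mapping $\Sigma_0$ to guarded languages over $(\Sigma_1,T_1)$, $\mathrm{apply}^{\mathfrak{s}'}(L)=\{\alpha_0\diamond w_0\diamond\alpha_1\diamond\cdots\diamond w_{n-1}\diamond\alpha_n:\alpha_0p_0\cdots p_{n-1}\alpha_n\in L,\ w_i\in\mathfrak{s}'(p_i)\}$; $\mathrm{apply}^{\mathfrak{s}'}_{\mathfrak{t}}=\mathrm{apply}^{\mathfrak{s}'}\circ\mathrm{apply}_{\mathfrak{t}}$. Automata composition. (1) $\mathsf{compose}_{\mathfrak{t}}(A)$ for $A=(Q,\delta,\iota)$ over $(\Sigma,T_0)$: with $\mathfrak{t}^{-1}(\beta)\in\mathsf{At}_{T_0}$ the atom such that $t\in\mathfrak{t}^{-1}(\beta)$ iff $\beta\le\mathfrak{t}(t)$, it is $(Q,\delta',\iota')$ over $(\Sigma,T_1)$ with $\delta'(q,\beta)=\delta(q,\mathfrak{t}^{-1}(\beta))$, $\iota'(\beta)=\iota(\mathfrak{t}^{-1}(\beta))$. (2) For $A=(Q,\delta,\iota)$ over $(\Sigma_0,T)$ and $\mathfrak{s}(p)=(Q_p,\delta_p,\iota_p)$ over $(\Sigma_1,T)$: $\hat\delta(q,\alpha)=\mathsf{accept}$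 if $\delta(q,\alpha)=\mathsf{accept}$; $=(p,q')$ if $\delta(q,\alpha)=(p,q')$ and $\iota_p(\alpha)\ne\mathsf{accept}$; $=\hat\delta(q',\alpha)$ if $\delta(q,\alpha)=(p,q')$ and $\iota_p(\alpha)=\mathsf{accept}$; $=\mathsf{reject}$ otherwise (including when the recursion does not terminate). $\hat\iota(\alpha)=\hat\delta(q,\alpha)$ if $\iota(\alpha)=(p,q)$ and $\iota_p(\alpha)=\mathsf{accept}$, else $\iota(\alpha)$. $\mathsf{compose}^{\mathfrak{s}}(A)=(Q',\delta',\iota')$ over $(\Sigma_1,T)$ with $Q'=\sum_{p\in\Sigma_0}Q_p\times Q$ and, for $q_p\in Q_p$, $q\in Q$: $\delta'((q_p,q),\alpha)=(p'',(q_p',q))$ if $\delta_p(q_p,\alpha)=(p'',q_p')$; $=(p'',(q_{p'},q'))$ if $\delta_p(q_p,\alpha)=\mathsf{accept}$, $\hat\delta(q,\alpha)=(p',q')$ and $\iota_{p'}(\alpha)=(p'',q_{p'})$; $=\mathsf{accept}$ if $\delta_p(q_p,\alpha)=\mathsf{accept}$ and $\hat\delta(q,\alpha)=\mathsf{accept}$; $=\mathsf{reject}$ otherwise; $\iota'(\alpha)=\mathsf{accept}$ if $\hat\iota(\alpha)=\mathsf{accept}$; $=(p'',(q_{p'},q))$ if $\hat\iota(\alpha)=(p',q)$ and $\iota_{p'}(\alpha)=(p'',q_{p'})$; $=\mathsf{reject}$ otherwise. (3) $\mathsf{compose}^{\mathfrak{s}}_{\mathfrak{t}}(A)=\mathsf{compose}^{\mathfrak{s}}(\mathsf{compose}_{\mathfrak{t}}(A))$.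 *)

From HB Require Import structures.
From mathcomp Require Import all_boot.
Set Implicit Arguments. Unset Strict Implicit. Unset Printing Implicit Defensive.

(* Atoms over a finite set of tests T: subsets of T (the tests that are true). *)
Definition atom (T : finType) := {set T}.

Inductive BA (T : Type) : Type :=
| BTest of T | BZero | BOne
| BAnd of BA T & BA T | BOr of BA T & BA T | BNot of BA T.

Fixpoint ba_eval (T : finType) (a : atom T) (b : BA T) : bool :=
  match b with
  | BTest t => t \in a
  | BZero => false | BOne => true
  | BAnd b1 b2 => ba_eval a b1 && ba_eval a b2
  | BOr b1 b2 => ba_eval a b1 || ba_eval a b2
  | BNot b1 => ~~ ba_eval a b1
  end.

(* Guarded strings alpha_0 p_0 alpha_1 ... p_{n-1} alpha_n, stored as
   (alpha_0, [:: (p_0, alpha_1); ...; (p_{n-1}, alpha_n)]). *)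
Definition gstring (S T : finType) := (atom T * seq (S * atom T))%type.
Definition lang (S T : finType) := gstring S T -> Prop.

Definition gs_last (S T : finType) (w : gstring S T) : atom T := last w.1 (map snd w.2).

Definition diamond (S T : finType) (u v : gstring S T) : option (gstring S T) :=
  if gs_last u == v.1 then Some (u.1, u.2 ++ v.2) else None.

Inductive res (S Q : Type) : Type := Acc | Rej | Act of S & Q.
Arguments Acc {S Q}. Arguments Rej {S Q}.

Record kat_aut (S T : finType) := KatAut {
  st : finType;
  delta : st -> atom T -> res S st;
  iota : atom T -> res S st }.
Arguments delta {S T} k _ _.
Arguments iota {S T} k _.

Inductive lang_from (S T : finType) (A : kat_aut S T) :
  (atom T -> res S (st A)) -> gstring S T -> Prop :=
| LF_acc gamma a : gamma a = Acc -> lang_from gamma (a, [::])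
| LF_act gamma a p q w :
    gamma a = Act p q -> lang_from (delta A q) w ->
    lang_from gamma (a, (p, w.1) :: w.2).

Arguments lang_from {S T} A _ _.
Definition L (S T : finType) (A : kat_aut S T) : lang S T := lang_from A (iota A).

Definition t_consistent (T0 T1 : finType) (t : T0 -> BA T1) (b : atom T1) (a : atom T0) : Prop :=
  forall x : T0, (x \in a) = ba_eval b (t x).

Fixpoint cons_list (S T0 T1 : finType) (t : T0 -> BA T1)
  (ws : seq (S * atom T1)) (vs : seq (S * atom T0)) : Prop :=
  match ws, vs with
  | [::], [::] => True
  | (p, b) :: ws', (q, a) :: vs' => p = q /\ t_consistent t b a /\ cons_list t ws' vs'
  | _, _ => False
  end.

Definition apply_t (S T0 T1 : finType) (t : T0 -> BA T1) (L0 : lang S T0) : lang S T1 :=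
  fun w => exists v, L0 v /\ t_consistent t w.1 v.1 /\ cons_list t w.2 v.2.

(* subst s' v x : x = alpha_0 <> w_0 <> alpha_1 <> ... <> w_{n-1} <> alpha_n
   for v = alpha_0 p_0 ... alpha_n and some w_i in s'(p_i) (right-nested). *)
Inductive subst (S0 S1 T : finType) (s' : S0 -> lang S1 T) :
  gstring S0 T -> gstring S1 T -> Prop :=
| Sub_nil a : subst s' (a, [::]) (a, [::])
| Sub_cons a p b rest w r y x :
    s' p w -> subst s' (b, rest) r ->
    diamond w r = Some y -> diamond (a, [::]) y = Some x ->
    subst s' (a, (p, b) :: rest) x.

Arguments subst {S0 S1 T} s' _ _.
Definition apply_s (S0 S1 T : finType) (s' : S0 -> lang S1 T) (L0 : lang S0 T) : lang S1 T :=
  fun x => exists v, L0 v /\ subst s' v x.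

Definition apply_st (S0 S1 T0 T1 : finType) (s' : S0 -> lang S1 T1) (t : T0 -> BA T1)
  (L0 : lang S0 T0) : lang S1 T1 := apply_s s' (apply_t t L0).

Definition t_inv (T0 T1 : finType) (t : T0 -> BA T1) (b : atom T1) : atom T0 :=
  [set x | ba_eval b (t x)].

Definition compose_t (S T0 T1 : finType) (t : T0 -> BA T1) (A : kat_aut S T0) : kat_aut S T1 :=
  @KatAut S T1 (st A) (fun q b => delta A q (t_inv t b)) (fun b => iota A (t_inv t b)).

Section ComposeS.
Variables (S0 S1 T : finType) (s : S0 -> kat_aut S1 T) (A : kat_aut S0 T).

(* hat-delta, computed with fuel: a non-terminating recursion gives reject.
   Along the deterministic recursion, a terminating one visits pairwise distinct
   states, so fuel #|st A| computes exactly the recursive definition. *)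
Fixpoint hat_delta_fuel (n : nat) (q : st A) (a : atom T) : res S0 (st A) :=
  match n with
  | 0 => Rej
  | n'.+1 =>
    match delta A q a with
    | Acc => Acc
    | Rej => Rej
    | Act p q' =>
      match iota (s p) a with
      | Acc => hat_delta_fuel n' q' a
      | _ => Act p q'
      end
    end
  end.

Definition hat_delta (q : st A) (a : atom T) := hat_delta_fuel #|st A| q a.

Definition hat_iota (a : atom T) : res S0 (st A) :=
  match iota A a with
  | Act p q => match iota (s p) a with Acc => hat_delta q a | _ => iota A a end
  | r => r
  end.

Definition cstate : finType := ({p : S0 & st (s p)} * st A)%type.

Definition enter (a : atom T) (r : res S0 (st A)) : res S1 cstate :=
  match r with
  | Acc => Acc
  | Act p' q' =>
    match iota (s p') a with
    | Act p'' qp => Act p'' (Tagged (fun p => st (s p)) qp, q')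
    | _ => Rej
    end
  | Rej => Rej
  end.

Definition cdelta (x : cstate) (a : atom T) : res S1 cstate :=
  let: (existT p qp, q) := x in
  match delta (s p) qp a with
  | Act p'' qp' => Act p'' (Tagged (fun p => st (s p)) qp', q)
  | Acc => enter a (hat_delta q a)
  | Rej => Rej
  end.

Definition ciota (a : atom T) : res S1 cstate := enter a (hat_iota a).

Definition compose_s : kat_aut S1 T := @KatAut S1 T cstate cdelta ciota.
End ComposeS.

Definition compose_st (S0 S1 T0 T1 : finType) (s : S0 -> kat_aut S1 T1)
  (t : T0 -> BA T1) (A : kat_aut S0 T0) : kat_aut S1 T1 :=
  compose_s s (compose_t t A).

(* The test substitution is simulated atom by atom through [t_inv t].

   For the action substitution, a state (q_p, q) of the composite runs s(p) from
   q_p and then resumes A at q, so it accepts exactly the coalesced products u <> z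
   of a word u of s(p) from q_p and a word z of the substituted language of A from
   q; this is proved by induction on the word. The delicate case is an action p of
   A for which s(p) accepts the current atom at once: it contributes nothing to the
   word, so the composite skips it, which is what hat-delta does. At a fixed atom a
   deterministic run of skips either stops or loops, and then loops within |Q|
   steps, so the fuel |Q| in the definition of hat-delta computes the paper's
   possibly non-terminating recursion exactly. *)

From Corelib Require Import Setoid.
From mathcomp Require Import all_boot zify.
Set Implicit Arguments. Unset Strict Implicit. Unset Printing Implicit Defensive.

Section Languages.
Variables (S T : finType).

Definition conc (L1 L2 : lang S T) : lang S T := fun x =>
  exists u z, [/\ L1 u, L2 z, gs_last u = z.1 & x = (u.1, u.2 ++ z.2)].

Variable D : kat_aut S T.

Lemma lang_fromE g x : lang_from D g x <->
  match g x.1 with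
  | Acc => x.2 = [::]
  | Rej => False
  | Act p q => exists2 y, x.2 = (p, y.1) :: y.2 & lang_from D (delta D q) y
  end.
Proof.
split; first by case=> [g' a -> | g' a p q y -> Hy] //; exists y.
case: x => a xs /=; case E: (g a) => [||p q] //; first by move->; apply: LF_acc.
by case=> y -> Hy; apply: LF_act E Hy.
Qed.

Lemma conc_lang_fromE g L2 a xs : conc (lang_from D g) L2 (a, xs) <->
  match g a with
  | Acc => L2 (a, xs)
  | Rej => False
  | Act p q => exists2 y, xs = (p, y.1) :: y.2 & conc (lang_from D (delta D q)) L2 y
  end.
Proof.
split.
  case=> [[a' us] [z [/lang_fromE /= Hu Hz Elast [-> ->]]]].
  case: (g a') Hu Elast => [-> Elast|//|p q [y -> Hy] Elast].
    by case: z Hz Elast => b zs Hz; rewrite /gs_last /= => ->.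
  by exists (y.1, y.2 ++ z.2) => //; exists y, z.
case E: (g a) => [||p q] //.
  move=> Hz; exists (a, [::]), (a, xs); split=> //.
  by apply/lang_fromE; rewrite E.
case=> _ -> [u [z [Hu Hz Elast ->]]].
exists (a, (p, u.1) :: u.2), z; split=> //.
by apply/lang_fromE; rewrite E; exists u.
Qed.
End Languages.

Section Substitution.
Variables (S0 S1 T : finType) (s' : S0 -> lang S1 T).

Lemma diamond_Some (u v y : gstring S1 T) :
  diamond u v = Some y <-> gs_last u = v.1 /\ y = (u.1, u.2 ++ v.2).
Proof.
rewrite /diamond; case: eqP => [-> | NE]; first by split=> [[<-] | [_ ->]].
by split=> // -[].
Qed.

Lemma substE v x : subst s' v x <->
  match v.2 with
  | [::] => x = (v.1, [::])
  | (p, b) :: rest => x.1 = v.1 /\ conc (s' p) (subst s' (b, rest)) x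
  end.
Proof.
split.
  case=> [//| a p b rest w r y x' Hw Hr /diamond_Some [Elast ->] /diamond_Some [Ea ->]].
  have -> : a = w.1 := Ea.
  by split=> //; exists w, r.
case: v => a [-> | [p b] rest [Ea [w [r [Hw Hr Elast Ex]]]]]; first exact: Sub_nil.
apply: Sub_cons Hw Hr _ _; first exact/diamond_Some.
by apply/diamond_Some; move: Ea; rewrite Ex /= => <-.
Qed.

Lemma subst_head v x : subst s' v x -> x.1 = v.1.
Proof. by case: v => a [|[p b] rest] /substE /= => [-> | []]. Qed.
End Substitution.

Section SubstitutedLanguage.
Variables (S0 S1 T : finType) (s' : S0 -> lang S1 T) (B : kat_aut S0 T).

Lemma apply_s_lang_fromE g a xs : apply_s s' (lang_from B g) (a, xs) <->
  match g a with
  | Acc => xs = [::]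
  | Rej => False
  | Act p q => conc (s' p) (apply_s s' (lang_from B (delta B q))) (a, xs)
  end.
Proof.
split.
  case=> v [Hv Hs]; have /= Ea := subst_head Hs.
  move: Hv Hs; case: v Ea => _ vs /= <- /lang_fromE /= Hv /substE /=.
  case: (g a) Hv => [-> [->] //|//|p q [[b rest] -> Hy] [_]].
  by case=> w [r [Hw Hr Elast Ex]]; exists w, r; split=> //; exists (b, rest).
case E: (g a) => [||p q] //.
  by move->; exists (a, [::]); split; [apply/lang_fromE; rewrite /= E | apply/substE].
case=> w [r [Hw [[b rest] [Hy Hr]] Elast Ex]].
exists (a, (p, b) :: rest); split; first by apply/lang_fromE; rewrite /= E; exists (b, rest).
by apply/substE; split=> //; exists w, r.
Qed.
End SubstitutedLanguage.

Section Composition.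
Variables (S0 S1 T : finType) (s : S0 -> kat_aut S1 T) (B : kat_aut S0 T).

Local Notation sub_lang g := (apply_s (fun p => L (s p)) (lang_from B g)).
Local Notation hat_fuel n q a := (@hat_delta_fuel _ _ _ s B n q a).

(* [hat_res a g r]: the recursion defining the paper's hat-delta, started from
   the transition [g a], terminates with [r]. *)
Inductive hat_res (a : atom T) : (atom T -> res S0 (st B)) -> res S0 (st B) -> Prop :=
| Hat_acc g : g a = Acc -> hat_res a g Acc
| Hat_act g p q : g a = Act p q -> iota (s p) a <> Acc -> hat_res a g (Act p q)
| Hat_skip g p q r :
    g a = Act p q -> iota (s p) a = Acc -> hat_res a (delta B q) r -> hat_res a g r.

Lemma hat_resE a g r : hat_res a g r <->
  match g a with
  | Acc => r = Acc
  | Rej => False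
  | Act p q => if iota (s p) a is Acc then hat_res a (delta B q) r else r = Act p q
  end.
Proof.
split.
  case=> [g' -> | g' p q -> Hi | g' p q r' -> -> //] //.
  by case: (iota (s p) a) Hi.
case E: (g a) => [||p q] //; first by move->; apply: Hat_acc.
case Ei: (iota (s p) a) => [||p' qp]; first exact: Hat_skip E Ei.
  by move->; apply: Hat_act; rewrite ?Ei.
by move->; apply: Hat_act; rewrite ?Ei.
Qed.

Definition settled a (r : res S0 (st B)) : Prop :=
  if r is Act p _ then iota (s p) a <> Acc else True.

Lemma hat_res_settled a g r : hat_res a g r -> r <> Rej /\ settled a r.
Proof. by elim. Qed.

Lemma hat_res_of_fuel n q a :
  hat_fuel n q a <> Rej -> hat_res a (delta B q) (hat_fuel n q a).
Proof.
elim: n q => [//|n IH] q /= Hr; apply/hat_resE; move: Hr.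
case: (delta B q a) => [||p q'] //.
by case: (iota (s p) a) => // /IH.
Qed.

Lemma fuel_of_hat_res a g r :
  hat_res a g r -> forall q, g a = delta B q a -> exists n, hat_fuel n q a = r.
Proof.
elim=> {g r} [g Hg | g p q Hg Hi | g p q r Hg Hi _ IH] q0 E.
- by exists 1; rewrite /= -E Hg.
- by exists 1; rewrite /= -E Hg; case: (iota (s p) a) Hi.
- by have [n Hn] := IH q erefl; exists n.+1; rewrite /= -E Hg Hi.
Qed.

Lemma hat_fuel_add n k q a : hat_fuel n q a <> Rej -> hat_fuel (n + k) q a = hat_fuel n q a.
Proof.
elim: n q => [//|n IH] q /=.
case: (delta B q a) => [||p q'] //.
by case: (iota (s p) a) => // /IH.
Qed.

Definition hat_next a q : st B :=
  if delta B q a is Act p q' then if iota (s p) a is Acc then q' else q else q.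

Lemma hat_fuel_iter k m q a :
  hat_fuel (k + m.+1) q a = hat_fuel m.+1 (iter k (hat_next a) q) a.
Proof.
have iter_fixed k' q' : hat_next a q' = q' -> iter k' (hat_next a) q' = q'.
  by move=> Eq; elim: k' => //= k' ->.
elim: k q => [//|k IH] q.
rewrite iterSr addSn /= {2}/hat_next.
case E: (delta B q a) => [||p q'].
- by rewrite iter_fixed /= ?E // /hat_next E.
- by rewrite iter_fixed /= ?E // /hat_next E.
case Ei: (iota (s p) a) => [||p' qp]; first exact: IH.
- by rewrite iter_fixed /= ?E ?Ei // /hat_next E Ei.
- by rewrite iter_fixed /= ?E ?Ei // /hat_next E Ei.
Qed.

Lemma hat_next_loops a q :
  exists2 i, i < #|st B| & iter i (hat_next a) q = iter #|st B| (hat_next a) q.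
Proof.
have /trajectP [i lt_i ->] := loopingP (looping_order (hat_next a) q) #|st B|.
by exists i => //; apply: leq_trans lt_i (max_card _).
Qed.

(* More fuel than [#|st B|] only lets the run of [hat_next] go round its loop. *)
Lemma hat_delta_fuel_stable n q a : hat_fuel n q a <> Rej -> hat_delta s q a = hat_fuel n q a.
Proof.
have [i lt_i Ei] := hat_next_loops a q.
elim/ltn_ind: n => n IH Hn.
have [le_n | lt_n] := leqP n #|st B|.
  by rewrite /hat_delta -(subnKC le_n) hat_fuel_add.
set m := (n - #|st B|).-1.
have En : n = #|st B| + m.+1 by rewrite /m; lia.
have Ein : hat_fuel n q a = hat_fuel (i + m.+1) q a by rewrite En !hat_fuel_iter Ei.
by rewrite Ein; apply: IH; rewrite -?Ein //; lia.
Qed.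

Definition is_hat a g (h : res S0 (st B)) := forall r, r <> Rej -> hat_res a g r <-> h = r.

Lemma is_hat_delta q a : is_hat a (delta B q) (hat_delta s q a).
Proof.
move=> r nr; split=> [Hr | Er]; last by rewrite -Er in nr *; apply: hat_res_of_fuel.
have [n En] := fuel_of_hat_res Hr erefl.
by rewrite -En (hat_delta_fuel_stable (n := n)) // En.
Qed.

Lemma is_hat_iota a : is_hat a (iota B) (hat_iota s B a).
Proof.
move=> r nr; rewrite hat_resE /hat_iota.
case: (iota B a) => [||p q]; [by split=> -> | by split=> // Er; case: nr | ].
case: (iota (s p) a) => [||p' qp]; [exact: is_hat_delta | by split=> -> | by split=> ->].
Qed.

Lemma settled_is_hat a g h : is_hat a g h -> settled a h.
Proof.
move=> Hh; case Eh: h => [||p q] //.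
have nr : h <> Rej by rewrite Eh.
by have [_] := hat_res_settled ((Hh h nr).2 erefl); rewrite Eh.
Qed.

Lemma sub_lang_hat_res a g r xs :
  hat_res a g r -> sub_lang g (a, xs) <-> sub_lang (fun _ => r) (a, xs).
Proof.
elim=> {g r} [g Hg | g p q Hg _ | g p q r Hg Hi _ IH]; try by rewrite !apply_s_lang_fromE Hg.
by rewrite -IH apply_s_lang_fromE Hg /L conc_lang_fromE Hi.
Qed.

Lemma hat_res_of_sub_lang g x : sub_lang g x -> exists r, hat_res x.1 g r.
Proof.
case=> v [Hv Hs]; rewrite (subst_head Hs).
elim: Hv x Hs => {g v} [g a Hg | g a p q [b rest] Hg Hy IH] [a' xs] Hs.
  by exists Acc; apply: Hat_acc.
case Ei: (iota (s p) a) => [||p' qp]; last 2 first.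
- by exists (Act p q); apply: Hat_act; rewrite ?Ei.
- by exists (Act p q); apply: Hat_act; rewrite ?Ei.
move/substE: Hs => /= [-> Hc]; move: Hc; rewrite /L conc_lang_fromE Ei => Hy'.
have [r Hr] := IH _ Hy'; exists r; apply: Hat_skip Hg Ei _.
by have /= -> := subst_head Hy'.
Qed.

Lemma sub_lang_is_hat a g h xs :
  is_hat a g h -> sub_lang g (a, xs) <-> sub_lang (fun _ => h) (a, xs).
Proof.
move=> Hh; split=> [Hx | ].
  have [r Hr] := hat_res_of_sub_lang Hx; have [nr _] := hat_res_settled Hr.
  by have -> := (Hh r nr).1 Hr; rewrite -(sub_lang_hat_res _ Hr).
have [Eh | nr] : h = Rej \/ h <> Rej by case: (h); [right | left | right].
  by rewrite Eh => /apply_s_lang_fromE.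
by rewrite (sub_lang_hat_res _ ((Hh h nr).2 erefl)).
Qed.

Local Notation C := (compose_s s B).

Definition state_lang (c : cstate s B) : lang S1 T :=
  let: (existT p qp, q) := c in conc (lang_from (s p) (delta (s p) qp)) (sub_lang (delta B q)).

Definition state_lang_spec (y : gstring S1 T) : Prop :=
  forall c, lang_from C (delta C c) y <-> state_lang c y.

Lemma lang_from_enter g a xs r :
    (forall p y, xs = (p, y.1) :: y.2 -> state_lang_spec y) ->
    g a = enter s a r -> settled a r ->
  lang_from C g (a, xs) <-> sub_lang (fun _ => r) (a, xs).
Proof.
move=> Htail Hg; rewrite lang_fromE apply_s_lang_fromE /= Hg {Hg}.
case: r => [||p q] //= Hi; rewrite /L conc_lang_fromE.
case: (iota (s p) a) Hi => [||p'' qp] // _.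
by split=> -[y Exs Hy]; exists y => //; apply/(Htail _ _ Exs (Tagged (fun p => st (s p)) qp, q)).
Qed.

Lemma state_lang_spec_step a xs :
  (forall p y, xs = (p, y.1) :: y.2 -> state_lang_spec y) -> state_lang_spec (a, xs).
Proof.
move=> Htail [[p qp] q]; rewrite /state_lang conc_lang_fromE.
case E: (delta (s p) qp a) => [||p'' qp'].
- rewrite (@lang_from_enter _ _ _ (hat_delta s q a) Htail); last first.
  + exact: settled_is_hat (is_hat_delta q a).
  + by rewrite /= E.
  exact: iff_sym (sub_lang_is_hat _ (is_hat_delta q a)).
- by rewrite lang_fromE /= E.
rewrite lang_fromE /= E.
by split=> -[y Exs Hy]; exists y => //; apply/(Htail _ _ Exs (Tagged (fun p => st (s p)) qp', q)).
Qed.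

Lemma lang_from_state c y : lang_from C (delta C c) y <-> state_lang c y.
Proof.
move: c; case: y => a xs; elim: xs a => [|[p b] xs IH] a.
  by apply: state_lang_spec_step.
by apply: state_lang_spec_step => p' [b' xs'] [_ <- <-].
Qed.

Lemma L_compose_s w : L C w <-> apply_s (fun p => L (s p)) (L B) w.
Proof.
case: w => a xs; rewrite /L (@lang_from_enter _ _ _ (hat_iota s B a)) //.
- exact: iff_sym (sub_lang_is_hat _ (is_hat_iota a)).
- by move=> p y _ c; apply: lang_from_state.
- exact: settled_is_hat (is_hat_iota a).
Qed.
End Composition.

Section TestSubstitution.
Variables (S T0 T1 : finType) (t : T0 -> BA T1) (A : kat_aut S T0).

Lemma t_inv_consistent b a : t_consistent t b a -> t_inv t b = a.
Proof. by move=> Hba; apply/setP => x; rewrite inE Hba. Qed.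

Lemma t_consistent_inv b : t_consistent t b (t_inv t b).
Proof. by move=> x; rewrite inE. Qed.

Lemma compose_t_lang_from_sound g w :
  lang_from (compose_t t A) (fun b => g (t_inv t b)) w ->
  exists v, [/\ lang_from A g v, t_consistent t w.1 v.1 & cons_list t w.2 v.2].
Proof.
move Eg: (fun b => g (t_inv t b)) => g' H.
elim: H g Eg => {g' w} [g' b Hb | g' b p q w Hb Hw IH] g Eg; subst g'.
  by exists (t_inv t b, [::]); split=> //; [apply: LF_acc | apply: t_consistent_inv].
have [v [Hv Hc Hl]] := IH (delta A q) erefl.
exists (t_inv t b, (p, v.1) :: v.2); split=> //; first exact: (LF_act (gamma := g) Hb Hv).
exact: t_consistent_inv.
Qed.

Lemma compose_t_lang_from_complete g v : lang_from A g v ->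
  forall w, t_consistent t w.1 v.1 -> cons_list t w.2 v.2 ->
  lang_from (compose_t t A) (fun b => g (t_inv t b)) w.
Proof.
elim=> {g v} [g a Hg | g a p q v Hg Hv IH] [b ws] /= Hba; have {Hba} Eb := t_inv_consistent Hba.
  by case: ws => [_ | [? ?] ? []]; apply: LF_acc; rewrite /= Eb.
case: ws => [//|[p' b'] ws] /= [-> [Hc Hl]].
by apply: (LF_act (w := (b', ws))) (IH (b', ws) Hc Hl); rewrite /= Eb.
Qed.

Lemma L_compose_t w : L (compose_t t A) w <-> apply_t t (L A) w.
Proof.
split=> [/compose_t_lang_from_sound [v [Hv Hc Hl]] | [v [Hv [Hc Hl]]]]; first by exists v.
exact: compose_t_lang_from_complete Hv _ Hc Hl.
Qed.
End TestSubstitution.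

Theorem proposition6p5 (S0 S1 T0 T1 : finType) (A : kat_aut S0 T0)
  (s : S0 -> kat_aut S1 T1) (t : T0 -> BA T1) :
  forall w : gstring S1 T1,
    L (compose_st s t A) w <-> apply_st (fun p => L (s p)) t (L A) w.
Proof.
move=> w; rewrite /compose_st L_compose_s.
by split=> -[v [Hv Hs]]; exists v; split=> //; apply/L_compose_t.
Qed.
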